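(* Let $\beta\in(0,1)$ and $\alpha=\frac{p}{n}\beta$. Suppose (A1) holds, and suppose CLARSTA has run for $K+1$ iterations with $\Delta_k\ge\Delta_{\min}$ for all $k\in\{0,\dots,K\}$. Let $\epsilon>0$. For all $k\in\mathcal{A}_{[0,K]}\cap\mathcal{M}_{[0,K]}$ with $\pi^f(\boldsymbol{x}_k)\ge\epsilon$, we have $$\pi^m(\boldsymbol{x}_k)\ge\epsilon_g(\epsilon),\qquad\text{where }\epsilon_g(\epsilon)=\frac{\alpha\epsilon}{\kappa_{eg}\mu+1}>0.$$
   Context: Problem: minimize $f:\mathbb{R}^n\to\mathbb{R}$ over $\mathcal{C}\subseteq\mathbb{R}^n$, closed convex with nonempty interior. $\|\cdot\|$ Euclidean/spectral norm; $\mathrm{proj}_{\mathcal{C}}$ Euclidean projection; $\sigma_{\min}$ smallest singular value. For $\boldsymbol{x}\in\mathcal{C}$, $\pi^f(\boldsymbol{x})=\left|\min_{\boldsymbol{d}\in\mathcal{C}-\boldsymbol{x},\|\boldsymbol{d}\|\le1}\nabla f(\boldsymbol{x})^\top\boldsymbol{d}\right|$. QR-factorizations have orthonormal-column $\boldsymbol{Q}$. A matrix $\boldsymbol{A}\in\mathbb{R}^{n\times z}$ with QR $\boldsymbol{A}=\boldsymbol{Q}\boldsymbol{R}$ is $\alpha$-well-aligned for $f$ and $\mathcal{C}$ at $\boldsymbol{x}$ if $|\min_{\boldsymbol{d}\in\mathcal{C}-\boldsymbol{x},\|\boldsymbol{d}\|\le1}\nabla f(\boldsymbol{x})^\top\boldsymbol{Q}\boldsymbol{Q}^\top\boldsymbol{d}|\ge\alpha\pi^f(\boldsymbol{x})$.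 Algorithm CLARSTA. Parameters: integers $1\le p_{\mathrm{rand}}\le p\le n$; $\boldsymbol{x}_0\in\mathcal{C}$; $\Delta_0>0$; $0<\Delta_{\min}\le\Delta_{\max}$; $\gamma_{\mathrm{dec}}\in(0,1)$; $\gamma_{\mathrm{inc}}^k\ge1$; $0<\eta_1\le\eta_2<1$; $\mu>0$; $\epsilon_{\mathrm{rad}}\ge1$; $\epsilon_{\mathrm{geo}}>0$. GEN$(q,\Delta,\boldsymbol{Q})$ ($\boldsymbol{Q}$ optional, orthonormal columns): draw $\boldsymbol{A}\in\mathbb{R}^{n\times q}$ with i.i.d. $\mathcal{N}(0,1)$ entries (fresh randomness), of full column rank; $\widetilde{\boldsymbol{A}}=\boldsymbol{A}-\boldsymbol{Q}\boldsymbol{Q}^\top\boldsymbol{A}$ if $\boldsymbol{Q}$ given, else $\boldsymbol{A}$; QR $\widetilde{\boldsymbol{A}}=[\widetilde{\boldsymbol{q}}_1\cdots\widetilde{\boldsymbol{q}}_q]\widetilde{\boldsymbol{R}}$; return $\Delta\widetilde{\boldsymbol{q}}_1,\dots,\Delta\widetilde{\boldsymbol{q}}_q$. REMOVE$(\boldsymbol{D}^U,\Delta,r)$: repeat $r$ times: for $\boldsymbol{D}^U=[\boldsymbol{d}_1\cdots\boldsymbol{d}_m]$ let $\boldsymbol{M}_i$ be $\boldsymbol{D}^U$ without column $i$, $\theta_i=\sigma_{\min}(\boldsymbol{M}_i)\max(\|\boldsymbol{d}_i\|^4/\Delta^4,1)$; delete the column with largest $\theta_i$. Initialization: $\boldsymbol{D}_0$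 = columns GEN$(p,\Delta_0)$. Iteration $k$: QR $\boldsymbol{D}_k=[\boldsymbol{d}_1\cdots\boldsymbol{d}_p]=\boldsymbol{Q}_k\boldsymbol{R}_k$, $\boldsymbol{R}_k=[\boldsymbol{r}_1\cdots\boldsymbol{r}_p]$; $\widehat f_k(\widehat{\boldsymbol{s}})=f(\boldsymbol{x}_k+\boldsymbol{Q}_k\widehat{\boldsymbol{s}})$; $\widehat m_k(\widehat{\boldsymbol{s}})=\widehat f_k(\boldsymbol{0}_p)+\boldsymbol{g}_k^\top\widehat{\boldsymbol{s}}$, $\boldsymbol{g}_k=(\boldsymbol{R}_k^\top)^{-1}\boldsymbol{\delta}_k$, $(\boldsymbol{\delta}_k)_i=\widehat f_k(\boldsymbol{r}_i)-\widehat f_k(\boldsymbol{0}_p)$; $\pi^m(\boldsymbol{x}_k)=\left|\min_{\boldsymbol{d}\in\boldsymbol{Q}_k^\top(\mathcal{C}-\boldsymbol{x}_k),\|\boldsymbol{d}\|\le1}\nabla\widehat m_k(\boldsymbol{0}_p)^\top\boldsymbol{d}\right|$ with $\boldsymbol{Q}_k^\top(\mathcal{C}-\boldsymbol{x}_k)=\{\boldsymbol{Q}_k^\top(\boldsymbol{z}-\boldsymbol{x}_k):\boldsymbol{z}\in\mathcal{C}\}$. If $\Delta_k\le\mu\pi^m(\boldsymbol{x}_k)$ (model accuracy test satisfied): approximately solve $\min\{\widehat m_k(\widehat{\boldsymbol{s}}):\widehat{\boldsymbol{s}}\in\boldsymbol{Q}_k^\top\mathcal{C},\|\widehat{\boldsymbol{s}}\|\le\Delta_k\}$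 giving $\widehat{\boldsymbol{s}}_k$; $\boldsymbol{s}_k=\mathrm{proj}_{\mathcal{C}}(\boldsymbol{x}_k+\boldsymbol{Q}_k\widehat{\boldsymbol{s}}_k)-\boldsymbol{x}_k$; $\rho_k=\frac{f(\boldsymbol{x}_k)-f(\boldsymbol{x}_k+\boldsymbol{s}_k)}{\widehat m_k(\boldsymbol{0}_p)-\widehat m_k(\widehat{\boldsymbol{s}}_k)}$; $\Delta_{k+1}=\gamma_{\mathrm{dec}}\Delta_k$ if $\rho_k<\eta_1$, $\min(\gamma^k_{\mathrm{inc}}\Delta_k,\Delta_{\max})$ if $\rho_k>\eta_2$, $\Delta_k$ otherwise; $\boldsymbol{x}_{k+1}$ any point of $\mathcal{C}$ with $f(\boldsymbol{x}_{k+1})\le\min(\{f(\boldsymbol{x}_k+\boldsymbol{s}_k)\}\cup\{f(\boldsymbol{x}_k+\boldsymbol{d}_i+\boldsymbol{d}_j):\boldsymbol{x}_k+\boldsymbol{d}_i+\boldsymbol{d}_j\in\mathcal{C},\ \boldsymbol{d}_i,\boldsymbol{d}_j\text{ columns of }[\boldsymbol{0}_n\ \boldsymbol{D}_k]\})$; $\boldsymbol{D}^U_{k+1}$: select $p$ linearly independent directions among $\boldsymbol{x}_k+\boldsymbol{s}_k-\boldsymbol{x}_{k+1}$ and $\boldsymbol{x}_k+\boldsymbol{d}_i+\boldsymbol{d}_j-\boldsymbol{x}_{k+1}$, apply REMOVE$(\cdot,\Delta_{k+1},p_{\mathrm{rand}})$, delete columns of norm $>\epsilon_{\mathrm{rad}}\Delta_{k+1}$,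 while nonempty with $\sigma_{\min}<\epsilon_{\mathrm{geo}}$ apply REMOVE$(\cdot,\Delta_{k+1},1)$, optionally remove more; with $p_1$ remaining columns, $\boldsymbol{D}^R_{k+1}$ = GEN$(p-p_1,\Delta_{k+1},$ orthonormal basis of column space of $\boldsymbol{D}^U_{k+1})$, $\boldsymbol{D}_{k+1}=[\boldsymbol{D}^U_{k+1}\ \boldsymbol{D}^R_{k+1}]$. Otherwise: $\Delta_{k+1}=\gamma_{\mathrm{dec}}\Delta_k$, $\boldsymbol{x}_{k+1}=\boldsymbol{x}_k$, $\boldsymbol{D}_{k+1}=\gamma_{\mathrm{dec}}\boldsymbol{D}_k$. Stop if $\Delta_{k+1}<\Delta_{\min}$. (A1): $\nabla f$ exists, is continuous and Lipschitz with constant $L_{\nabla f}$. $M_{\widehat{\boldsymbol{R}}^{-1}}=\max\{1/\epsilon_{\mathrm{geo}},1/\Delta_{\min}\}\epsilon_{\mathrm{rad}}\Delta_{\max}$ and $\kappa_{eg}=\frac12L_{\nabla f}(2+\sqrt{p}M_{\widehat{\boldsymbol{R}}^{-1}})\epsilon_{\mathrm{rad}}$. For $0\le K_1\le K_2\le K$: $\mathcal{A}_{[K_1,K_2]}$ is the set of $k\in\{K_1,\dots,K_2\}$ such that $\boldsymbol{D}_k$ is $\alpha$-well-aligned for $f$ and $\mathcal{C}$ at $\boldsymbol{x}_k$; $\mathcal{M}_{[K_1,K_2]}$ is the set of $k\in\{K_1,\dots,K_2\}$ where the model accuracy test $\Delta_k\le\mu\pi^m(\boldsymbol{x}_k)$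 holds. *)

From HB Require Import structures.
From mathcomp Require Import all_boot all_order all_algebra.
From mathcomp Require Import all_classical all_reals all_analysis.
Set Implicit Arguments. Unset Strict Implicit. Unset Printing Implicit Defensive.
Import Order.TTheory GRing.Theory Num.Theory.
Import numFieldNormedType.Exports.
Local Open Scope classical_set_scope.
Local Open Scope ring_scope.

Section CLARSTA.
Variables (R : realType) (n : nat).
Notation vec := 'cV[R]_n.

Definition dotv (m : nat) (u v : 'cV[R]_m) : R := (u^T *m v) 0 0.
Definition enorm (m : nat) (v : 'cV[R]_m) : R := Num.sqrt (\sum_i v i 0 ^+ 2).

Definition seqmx (s : seq vec) : 'M[R]_(n, size s) :=
  \matrix_(i < n, j < size s) (nth 0 s j) i 0.
Definition cols (z : nat) (M : 'M[R]_(n, z)) : seq vec :=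
  [seq col i M | i <- enum 'I_z].

(* smallest singular value of an n x z matrix (z <= n in all uses):
   min_{||c|| = 1} ||M c|| *)
Definition sigma_min (z : nat) (M : 'M[R]_(n, z)) : R :=
  inf [set enorm (M *m c) | c in [set c : 'cV[R]_z | enorm c = 1]].
Definition sigma_min_seq (s : seq vec) : R := sigma_min (seqmx s).

Definition upper_tri (z : nat) (Rr : 'M[R]_z) : Prop :=
  forall i j : 'I_z, (j < i)%N -> Rr i j = 0.
Definition isQR (z : nat) (A Q : 'M[R]_(n, z)) (Rr : 'M[R]_z) : Prop :=
  A = Q *m Rr /\ Q^T *m Q = 1%:M /\ upper_tri Rr.

Definition is_proj (C : set vec) (z y : vec) : Prop :=
  C y /\ forall w, C w -> enorm (z - y) <= enorm (z - w).

Definition pif (C : set vec) (g : vec) (x : vec) : R :=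
  `| inf [set dotv g d | d in [set d : vec | C (x + d) /\ enorm d <= 1]] |.

Definition well_aligned (z : nat) (alpha : R) (C : set vec) (g : vec) (x : vec)
    (Q : 'M[R]_(n, z)) : Prop :=
  `| inf [set dotv g (Q *m Q^T *m d) | d in [set d : vec | C (x + d) /\ enorm d <= 1]] |
    >= alpha * pif C g x.

Definition model_grad (p : nat) (f : vec -> R) (x : vec) (Q : 'M[R]_(n, p))
    (Rr : 'M[R]_p) : 'cV[R]_p :=
  invmx Rr^T *m \col_(i < p) (f (x + Q *m col i Rr) - f x).

Definition pim (p : nat) (C : set vec) (x : vec) (Q : 'M[R]_(n, p)) (g : 'cV[R]_p) : R :=
  `| inf [set dotv g d | d in
        [set d : 'cV[R]_p | (exists2 z, C z & d = Q^T *m (z - x)) /\ enorm d <= 1]] |.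

(* GEN(q, Delta, Qb): Qb has orthonormal columns (m = 0 means "no Q given") *)
Definition GEN (q : nat) (Dl : R) (m : nat) (Qb : 'M[R]_(n, m)) (out : seq vec) : Prop :=
  exists (A : 'M[R]_(n, q)) (Qt : 'M[R]_(n, q)) (Rt : 'M[R]_q),
    \rank A = q /\ isQR (A - Qb *m Qb^T *m A) Qt Rt /\ Rt \in unitmx /\
    out = [seq Dl *: col i Qt | i <- enum 'I_q].

Definition rem_nth (i : nat) (s : seq vec) : seq vec := take i s ++ drop i.+1 s.
Definition theta (Dl : R) (s : seq vec) (i : nat) : R :=
  sigma_min_seq (rem_nth i s) * Num.max (enorm (nth 0 s i) ^+ 4 / Dl ^+ 4) 1.
Definition remove_step (Dl : R) (s t : seq vec) : Prop :=
  exists2 i, (i < size s)%N &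
    t = rem_nth i s /\ forall j, (j < size s)%N -> theta Dl s j <= theta Dl s i.
Fixpoint remove_iter (Dl : R) (r : nat) (s t : seq vec) : Prop :=
  match r with
  | O => t = s
  | r'.+1 => exists u, remove_step Dl s u /\ remove_iter Dl r' u t
  end.
Inductive geo_loop (egeo Dl : R) : seq vec -> seq vec -> Prop :=
  | geo_stop s : (s = [::] \/ egeo <= sigma_min_seq s) -> geo_loop egeo Dl s s
  | geo_step s u t : s <> [::] -> sigma_min_seq s < egeo -> remove_step Dl s u ->
      geo_loop egeo Dl u t -> geo_loop egeo Dl s t.

(* columns of [0_n D] *)
Definition colo (p : nat) (D : 'M[R]_(n, p)) (i : option 'I_p) : vec :=
  if i is Some j then col j D else 0.

Definition clarsta_params (p prand : nat) (Delta0 Dmin Dmax gdec : R) (ginc : nat -> R)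
    (eta1 eta2 mu erad egeo : R) : Prop :=
  [/\ (1 <= prand)%N /\ (prand <= p)%N /\ (p <= n)%N,
      0 < Delta0 /\ 0 < Dmin /\ Dmin <= Dmax /\ Delta0 <= Dmax,
      0 < gdec /\ gdec < 1 /\ (forall k, 1 <= ginc k),
      0 < eta1 /\ eta1 <= eta2 /\ eta2 < 1 /\ 0 < mu
    & 1 <= erad /\ 0 < egeo].

Definition clarsta_step (p prand : nat) (f : vec -> R) (C : set vec)
    (Dmax gdec : R) (ginc : nat -> R) (eta1 eta2 mu erad egeo : R) (k : nat)
    (x : nat -> vec) (Delta : nat -> R) (D Q : nat -> 'M[R]_(n, p))
    (Rm : nat -> 'M[R]_p) : Prop :=
  let g := model_grad f (x k) (Q k) (Rm k) in
  if Delta k <= mu * pim C (x k) (Q k) g then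
    exists (shat : 'cV[R]_p) (s : vec) (s0 s1 s3 sU : seq vec) (m : nat)
           (Qb : 'M[R]_(n, m)) (out : seq vec),
      let rho := (f (x k) - f (x k + s)) / (- dotv g shat) in
      [/\ ((exists2 z, C z & shat = (Q k)^T *m z) /\ enorm shat <= Delta k),
          is_proj C (x k + Q k *m shat) (x k + s),
          Delta k.+1 = (if rho < eta1 then gdec * Delta k
                        else if eta2 < rho then Num.min (ginc k * Delta k) Dmax
                        else Delta k),
          [/\ C (x k.+1), f (x k.+1) <= f (x k + s) &
              forall i j, C (x k + colo (D k) i + colo (D k) j) ->
                f (x k.+1) <= f (x k + colo (D k) i + colo (D k) j)]
        & [/\ [/\ size s0 = p, \rank (seqmx s0) = p &
                 forall v, v \in s0 -> v = x k + s - x k.+1 \/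
                   exists i j, v = x k + colo (D k) i + colo (D k) j - x k.+1],
              [/\ remove_iter (Delta k.+1) prand s0 s1,
                 geo_loop egeo (Delta k.+1)
                    [seq v <- s1 | enorm v <= erad * Delta k.+1] s3
               & subseq sU s3],
              Qb^T *m Qb = 1%:M /\ (Qb^T :=: (seqmx sU)^T)%MS,
              GEN (p - size sU) (Delta k.+1) Qb out
            & cols (D k.+1) = sU ++ out]]
  else
    [/\ Delta k.+1 = gdec * Delta k, x k.+1 = x k & D k.+1 = gdec *: D k].

Definition clarsta_run (p prand : nat) (f : vec -> R) (C : set vec)
    (Dmax gdec : R) (ginc : nat -> R) (eta1 eta2 mu erad egeo : R) (K : nat)
    (x : nat -> vec) (Delta : nat -> R) (D Q : nat -> 'M[R]_(n, p))
    (Rm : nat -> 'M[R]_p) : Prop :=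
  [/\ C (x 0),
      GEN p (Delta 0) (0 : 'M[R]_(n, 0)) (cols (D 0)),
      (forall k, (k <= K)%N -> isQR (D k) (Q k) (Rm k))
    & forall k, (k < K)%N ->
        clarsta_step prand f C Dmax gdec ginc eta1 eta2 mu erad egeo k x Delta D Q Rm].

Definition A1 (f : vec -> R) (gradf : vec -> vec) (L : R) : Prop :=
  (forall x, differentiable f x /\ forall v, 'd f x v = dotv (gradf x) v) /\
  continuous gradf /\
  forall x y, enorm (gradf x - gradf y) <= L * enorm (x - y).

Definition M_Rinv (Dmin Dmax erad egeo : R) : R :=
  Num.max (1 / egeo) (1 / Dmin) * erad * Dmax.
Definition kappa_eg (p : nat) (L Dmin Dmax erad egeo : R) : R :=
  L / 2 * (2 + Num.sqrt p%:R * M_Rinv Dmin Dmax erad egeo) * erad.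

End CLARSTA.

From HB Require Import structures.
From mathcomp Require Import all_boot all_order all_algebra.
From mathcomp Require Import all_classical all_reals all_analysis.
From mathcomp Require Import ring lra.
Import Order.TTheory GRing.Theory Num.Theory.
Import numFieldNormedType.Exports.
Local Open Scope classical_set_scope.
Local Open Scope ring_scope.

Set Implicit Arguments. Unset Strict Implicit. Unset Printing Implicit Defensive.

(* The model gradient is accurate to first order in Delta_k.  Along the run, every
   direction matrix D_k has columns of norm at most erad Delta_k and smallest singular
   value at least c Delta_k, c = 1 / (max(1/egeo, 1/Dmin) Dmax): the directions drawn
   by GEN are orthonormal, scaled by Delta and orthogonal to the kept ones, the kept
   ones have smallest singular value at least egeo, and unsuccessful iterations scale
   D_k and Delta_k together.  Writing D_k = Q_k R_k, the vector
   R_k^T (g_k - Q_k^T grad f(x_k)) has entries f(x_k + d_i) - f(x_k) - grad f(x_k).d_i,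
   which are O(L |d_i|^2) by Taylor, so |g_k - Q_k^T grad f(x_k)| <= kappa_eg Delta_k.
   Replacing Q_k^T grad f(x_k) by g_k moves the criticality measure by at most this
   error, whence alpha pi^f(x_k) <= pi^m(x_k) + kappa_eg Delta_k
   <= (1 + kappa_eg mu) pi^m(x_k) under the accuracy test. *)

Section InnerProduct.
Variable R : realType.

Definition sqnorm m (v : 'cV[R]_m) : R := dotv v v.

Lemma dotvE m (u v : 'cV[R]_m) : dotv u v = \sum_i u i 0 * v i 0.
Proof. by rewrite /dotv !mxE; apply: eq_bigr => i _; rewrite !mxE. Qed.

Lemma dotvC m (u v : 'cV[R]_m) : dotv u v = dotv v u.
Proof. by rewrite !dotvE; apply: eq_bigr => i _; rewrite mulrC. Qed.

Lemma dotvDl m (u v w : 'cV[R]_m) : dotv (u + v) w = dotv u w + dotv v w.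
Proof. by rewrite /dotv linearD mulmxDl mxE. Qed.

Lemma dotvZl m a (u w : 'cV[R]_m) : dotv (a *: u) w = a * dotv u w.
Proof. by rewrite /dotv linearZ /= -scalemxAl mxE. Qed.

Lemma dotvNl m (u w : 'cV[R]_m) : dotv (- u) w = - dotv u w.
Proof. by rewrite -scaleN1r dotvZl mulN1r. Qed.

Lemma dotvBl m (u v w : 'cV[R]_m) : dotv (u - v) w = dotv u w - dotv v w.
Proof. by rewrite dotvDl dotvNl. Qed.

Lemma dotvDr m (u v w : 'cV[R]_m) : dotv w (u + v) = dotv w u + dotv w v.
Proof. by rewrite dotvC dotvDl !(dotvC w). Qed.

Lemma dotvZr m a (u w : 'cV[R]_m) : dotv w (a *: u) = a * dotv w u.
Proof. by rewrite dotvC dotvZl dotvC. Qed.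

Lemma dotv0l m (w : 'cV[R]_m) : dotv 0 w = 0.
Proof. by rewrite -(scale0r 0) dotvZl mul0r. Qed.

Lemma dotv0r m (w : 'cV[R]_m) : dotv w 0 = 0.
Proof. by rewrite dotvC dotv0l. Qed.

Lemma dotv_mulmx m k (A : 'M[R]_(m, k)) u v : dotv u (A *m v) = dotv (A^T *m u) v.
Proof. by rewrite /dotv trmx_mul trmxK mulmxA. Qed.

Lemma sqnorm_ge0 m (v : 'cV[R]_m) : 0 <= sqnorm v.
Proof. by rewrite /sqnorm dotvE sumr_ge0 // => i _; rewrite -expr2 sqr_ge0. Qed.

Lemma sqnorm_eq0 m (v : 'cV[R]_m) : sqnorm v = 0 -> v = 0.
Proof.
rewrite /sqnorm dotvE => /eqP; rewrite psumr_eq0 => [/allP v0|i _]; last first.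
  by rewrite -expr2 sqr_ge0.
apply/matrixP => i j; rewrite (ord1 j) mxE.
by have /implyP/(_ isT) := v0 i (mem_index_enum i); rewrite -expr2 sqrf_eq0 => /eqP.
Qed.

Lemma sqnormZ m a (v : 'cV[R]_m) : sqnorm (a *: v) = a ^+ 2 * sqnorm v.
Proof. by rewrite /sqnorm dotvZl dotvZr mulrA expr2. Qed.

Lemma sqnormD m (u v : 'cV[R]_m) : sqnorm (u + v) = sqnorm u + sqnorm v + 2 * dotv u v.
Proof. by rewrite /sqnorm dotvDl !dotvDr (dotvC v u); ring. Qed.

Lemma enormE m (v : 'cV[R]_m) : enorm v = Num.sqrt (sqnorm v).
Proof. by rewrite /enorm /sqnorm dotvE; congr Num.sqrt; apply: eq_bigr => i _; rewrite expr2. Qed.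

Lemma enorm_ge0 m (v : 'cV[R]_m) : 0 <= enorm v.
Proof. by rewrite enormE sqrtr_ge0. Qed.

Lemma enorm_sqr m (v : 'cV[R]_m) : enorm v ^+ 2 = sqnorm v.
Proof. by rewrite enormE sqr_sqrtr // sqnorm_ge0. Qed.

Lemma enorm_eq0 m (v : 'cV[R]_m) : enorm v = 0 -> v = 0.
Proof. by move=> v0; apply: sqnorm_eq0; rewrite -enorm_sqr v0 expr0n. Qed.

Lemma enorm0 m : enorm (0 : 'cV[R]_m) = 0.
Proof. by rewrite enormE /sqnorm dotv0l sqrtr0. Qed.

Lemma enormZ m a (v : 'cV[R]_m) : enorm (a *: v) = `|a| * enorm v.
Proof. by rewrite !enormE sqnormZ sqrtrM ?sqr_ge0 // sqrtr_sqr. Qed.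

Lemma enormN m (v : 'cV[R]_m) : enorm (- v) = enorm v.
Proof. by rewrite -scaleN1r enormZ normrN normr1 mul1r. Qed.

Lemma sqnorm_le_enorm m k (u : 'cV[R]_m) (v : 'cV[R]_k) a :
  0 <= a -> a ^+ 2 * sqnorm u <= sqnorm v -> a * enorm u <= enorm v.
Proof.
move=> a0 uv; rewrite -(ler_pXn2r (n := 2)) ?nnegrE ?mulr_ge0 ?enorm_ge0 //.
by rewrite exprMn !enorm_sqr.
Qed.

Lemma cauchy_schwarz m (u v : 'cV[R]_m) : dotv u v <= enorm u * enorm v.
Proof.
have [u0|nu0] := eqVneq (enorm u) 0.
  by rewrite (enorm_eq0 u0) dotv0l enorm0 mul0r.
have [v0|nv0] := eqVneq (enorm v) 0.
  by rewrite (enorm_eq0 v0) dotv0r enorm0 mulr0.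
have uv0 : 0 < enorm u * enorm v by rewrite mulr_gt0 // lt0r ?nu0 ?nv0 enorm_ge0.
have := sqnorm_ge0 (enorm v *: u + (- enorm u) *: v).
rewrite sqnormD !sqnormZ dotvZl dotvZr -!enorm_sqr => expansion.
by rewrite -(ler_pM2l uv0); nra.
Qed.

Lemma abs_dotv_le m (u v : 'cV[R]_m) : `|dotv u v| <= enorm u * enorm v.
Proof.
by rewrite ler_norml cauchy_schwarz andbT lerNl -dotvNl -(enormN u) cauchy_schwarz.
Qed.

Lemma sqnorm_orthonormal m k (Q : 'M[R]_(m, k)) c :
  Q^T *m Q = 1%:M -> sqnorm (Q *m c) = sqnorm c.
Proof. by move=> QQ; rewrite /sqnorm dotv_mulmx mulmxA QQ mul1mx. Qed.

Lemma enorm_trmx_orthonormal m k (Q : 'M[R]_(m, k)) (v : 'cV[R]_m) :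
  Q^T *m Q = 1%:M -> enorm (Q^T *m v) <= enorm v.
Proof.
move=> QQ; set u := Q^T *m v.
have [u0|nu0] := eqVneq (enorm u) 0; first by rewrite u0 enorm_ge0.
have u_gt0 : 0 < enorm u by rewrite lt0r nu0 enorm_ge0.
rewrite -(ler_pM2l u_gt0) -expr2 enorm_sqr /sqnorm {2}/u dotv_mulmx trmxK.
by rewrite (le_trans (cauchy_schwarz _ _)) // !enormE sqnorm_orthonormal.
Qed.

End InnerProduct.

Section Frames.
Variables (R : realType) (n : nat).
Notation vec := 'cV[R]_n.

Definition lincomb (cs : seq R) (s : seq vec) : vec := \sum_(i <- zip cs s) i.1 *: i.2.
Definition sumsq (cs : seq R) : R := \sum_(c <- cs) c ^+ 2.
Definition coefs m (c : 'cV[R]_m) : seq R := [seq c i 0 | i <- enum 'I_m].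

Lemma lincomb_nil cs : lincomb cs [::] = 0.
Proof. by case: cs => [|c cs]; rewrite /lincomb big_nil. Qed.

Lemma lincomb_cons c cs v s : lincomb (c :: cs) (v :: s) = c *: v + lincomb cs s.
Proof. by rewrite /lincomb /= big_cons. Qed.

Lemma lincomb_cat cs1 cs2 s1 s2 : size cs1 = size s1 ->
  lincomb (cs1 ++ cs2) (s1 ++ s2) = lincomb cs1 s1 + lincomb cs2 s2.
Proof. by move=> eq_sz; rewrite /lincomb zip_cat // big_cat. Qed.

Lemma lincomb_scale a cs s : lincomb cs [seq a *: v | v <- s] = a *: lincomb cs s.
Proof.
elim: s cs => [|v s IHs] [|c cs] /=; rewrite ?lincomb_nil ?scaler0 //.
  by rewrite /lincomb big_nil scaler0.
by rewrite !lincomb_cons IHs scalerDr !scalerA mulrC.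
Qed.

Lemma dotv_lincomb_orth cs s w :
  {in s, forall v, dotv v w = 0} -> dotv (lincomb cs s) w = 0.
Proof.
elim: s cs => [|v s IHs] [|c cs] sw; rewrite ?lincomb_nil ?dotv0l //.
  by rewrite /lincomb big_nil dotv0l.
rewrite lincomb_cons dotvDl dotvZl sw ?mem_head // mulr0 add0r IHs // => u su.
by rewrite sw // in_cons su orbT.
Qed.

Lemma sumsq_cat cs1 cs2 : sumsq (cs1 ++ cs2) = sumsq cs1 + sumsq cs2.
Proof. by rewrite /sumsq big_cat. Qed.

Lemma sumsq_ge0 cs : 0 <= sumsq cs.
Proof. by rewrite /sumsq sumr_ge0 // => c _; rewrite sqr_ge0. Qed.

Lemma size_coefs m (c : 'cV[R]_m) : size (coefs c) = m.
Proof. by rewrite size_map size_enum_ord. Qed.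

Lemma sumsq_coefs m (c : 'cV[R]_m) : sumsq (coefs c) = sqnorm c.
Proof.
rewrite /sumsq /coefs big_map big_enum /= /sqnorm dotvE.
by apply: eq_bigr => i _; rewrite expr2.
Qed.

Lemma coefs_col m (cs : seq R) : size cs = m -> coefs (\col_(i < m) cs`_i) = cs.
Proof.
move=> sz_cs; apply: (@eq_from_nth _ 0) => [|i]; first by rewrite size_coefs.
rewrite size_coefs => lt_i_m.
rewrite /coefs (nth_map (Ordinal lt_i_m)) ?size_enum_ord // mxE.
by rewrite (nth_enum_ord (Ordinal lt_i_m) lt_i_m).
Qed.

Lemma size_cols m (M : 'M[R]_(n, m)) : size (cols M) = m.
Proof. by rewrite size_map size_enum_ord. Qed.

Lemma mulmx_lincomb m (M : 'M[R]_(n, m)) c : M *m c = lincomb (coefs c) (cols M).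
Proof.
rewrite /lincomb /coefs /cols zip_map big_map.
apply/matrixP => i j; rewrite (ord1 j) !mxE summxE big_enum /=.
by apply: eq_bigr => k _; rewrite !mxE mulrC.
Qed.

Lemma cols_seqmx (s : seq vec) : cols (seqmx s) = s.
Proof.
apply: (@eq_from_nth _ 0) => [|i]; first by rewrite size_cols.
rewrite size_cols => lt_i_s.
rewrite /cols (nth_map (Ordinal lt_i_s)) ?size_enum_ord //.
apply/matrixP => a b; rewrite (ord1 b) !mxE.
by rewrite (nth_enum_ord (Ordinal lt_i_s) lt_i_s).
Qed.

Lemma cols_scale m a (M : 'M[R]_(n, m)) : cols (a *: M) = [seq a *: v | v <- cols M].
Proof.
rewrite /cols; elim: (enum 'I_m) => //= j js ->.
by congr cons; apply/matrixP => i k; rewrite !mxE.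
Qed.

Lemma col_in_cols m (M : 'M[R]_(n, m)) j : col j M \in cols M.
Proof. by apply: map_f; rewrite mem_enum. Qed.

(* For [0 <= a]: the matrix with columns [s] has smallest singular value at least [a].
   Coefficients are lists so that columns can be dropped and concatenated. *)
Definition frame_lb (a : R) (s : seq vec) : Prop :=
  forall cs, size cs = size s -> a ^+ 2 * sumsq cs <= sqnorm (lincomb cs s).

Lemma frame_lb_mulmx m a (M : 'M[R]_(n, m)) c :
  frame_lb a (cols M) -> a ^+ 2 * sqnorm c <= sqnorm (M *m c).
Proof.
by move=> Ma; rewrite mulmx_lincomb -sumsq_coefs Ma // size_coefs size_cols.
Qed.

Lemma frame_lb_nil a : frame_lb a [::].
Proof. by case=> [|? ?] // _; rewrite /sumsq big_nil mulr0 sqnorm_ge0. Qed.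

Lemma frame_lb_le a b s : 0 <= a <= b -> frame_lb b s -> frame_lb a s.
Proof.
move=> /andP[a0 ab] sb cs sz_cs; apply: le_trans (sb _ sz_cs).
by rewrite ler_wpM2r ?sumsq_ge0 // ler_sqr ?nnegrE // (le_trans a0).
Qed.

Lemma frame_lb_scale a g s : frame_lb a s -> frame_lb (`|g| * a) [seq g *: v | v <- s].
Proof.
move=> sa cs; rewrite size_map => sz_cs.
by rewrite lincomb_scale sqnormZ exprMn real_normK ?num_real // -mulrA ler_wpM2l ?sqr_ge0 ?sa.
Qed.

Lemma frame_lb_drop a s1 v s2 : frame_lb a (s1 ++ v :: s2) -> frame_lb a (s1 ++ s2).
Proof.
move=> sa cs; rewrite size_cat => sz_cs.
have sz1 : size (take (size s1) cs) = size s1 by rewrite size_takel // sz_cs leq_addr.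
have := sa (take (size s1) cs ++ 0 :: drop (size s1) cs).
rewrite !size_cat /= size_drop sz_cs sz1 addKn => /(_ erefl).
rewrite !lincomb_cat // lincomb_cons scale0r add0r !sumsq_cat /sumsq big_cons expr0n /= add0r.
by rewrite -lincomb_cat // cat_take_drop -sumsq_cat cat_take_drop.
Qed.

Lemma frame_lb_subseq a s t : subseq s t -> frame_lb a t -> frame_lb a s.
Proof.
suff gen pre : subseq s t -> frame_lb a (pre ++ t) -> frame_lb a (pre ++ s).
  exact: (gen [::]).
elim: t s pre => [|v t IHt] s pre; first by rewrite subseq0 => /eqP ->.
case: s => [|u s] /=.
  by move=> _ /frame_lb_drop; apply: IHt (sub0seq _).
case: eqP => [->|_] sub_st ta; last by apply: IHt => //; apply: frame_lb_drop ta.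
by rewrite -cat_rcons; apply: IHt; rewrite // cat_rcons.
Qed.

Lemma frame_lb_sigma_min a s : 0 <= a -> a <= sigma_min_seq s -> frame_lb a s.
Proof.
move=> a0 a_le cs sz_cs.
have -> : lincomb cs s = seqmx s *m \col_(i < size s) cs`_i.
  by rewrite mulmx_lincomb coefs_col // cols_seqmx.
have -> : sumsq cs = sqnorm (\col_(i < size s) cs`_i) by rewrite -sumsq_coefs coefs_col.
set c := \col__ _.
have [c0|nc0] := eqVneq (enorm c) 0.
  by rewrite -enorm_sqr c0 expr0n mulr0 sqnorm_ge0.
have c_gt0 : 0 < enorm c by rewrite lt0r nc0 enorm_ge0.
have unit_c : enorm ((enorm c)^-1 *: c) = 1.
  by rewrite enormZ ger0_norm ?invr_ge0 ?enorm_ge0 // mulVf.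
have : a <= enorm (seqmx s *m ((enorm c)^-1 *: c)).
  apply: le_trans a_le _; apply: ge_inf; last by exists ((enorm c)^-1 *: c).
  by exists 0 => _ [w _ <-]; rewrite enorm_ge0.
rewrite -scalemxAr enormZ ger0_norm ?invr_ge0 ?enorm_ge0 // ler_pdivlMl // => ac.
by rewrite -!enorm_sqr -exprMn lerXn2r ?nnegrE ?mulr_ge0 ?enorm_ge0 // mulrC.
Qed.

Lemma frame_lb_orthonormal m (Q : 'M[R]_(n, m)) : Q^T *m Q = 1%:M -> frame_lb 1 (cols Q).
Proof.
move=> QQ cs; rewrite size_cols => sz_cs.
rewrite -(coefs_col sz_cs) -mulmx_lincomb sqnorm_orthonormal // sumsq_coefs.
by rewrite expr1n mul1r.
Qed.

Lemma frame_lb_cat_orth a b s t : 0 <= a -> 0 <= b ->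
  frame_lb a s -> frame_lb b t -> {in s & t, forall u v, dotv u v = 0} ->
  frame_lb (Num.min a b) (s ++ t).
Proof.
move=> a0 b0 sa tb st cs; rewrite size_cat => sz_cs.
rewrite -(cat_take_drop (size s) cs) sumsq_cat.
have sz1 : size (take (size s) cs) = size s by rewrite size_takel // sz_cs leq_addr.
have sz2 : size (drop (size s) cs) = size t by rewrite size_drop sz_cs addKn.
rewrite lincomb_cat // sqnormD.
rewrite (@dotv_lincomb_orth _ s) ?mulr0 ?addr0 => [|u su]; last first.
  by rewrite dotvC dotv_lincomb_orth // => v tv; rewrite dotvC st.
have min_a : Num.min a b ^+ 2 <= a ^+ 2 by rewrite ler_sqr ?nnegrE ?le_min ?a0 ?ge_min ?lexx.
have min_b : Num.min a b ^+ 2 <= b ^+ 2.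
  by rewrite ler_sqr ?nnegrE ?le_min ?a0 ?b0 // ge_min lexx orbT.
have := sa _ sz1; have := tb _ sz2.
have := ler_wpM2r (sumsq_ge0 (take (size s) cs)) min_a.
have := ler_wpM2r (sumsq_ge0 (drop (size s) cs)) min_b.
lra.
Qed.

End Frames.

Section NewDirections.
Variables (R : realType) (n : nat).
Notation vec := 'cV[R]_n.

Lemma col_mulmx m1 m2 k (A : 'M[R]_(m1, m2)) (B : 'M[R]_(m2, k)) i : col i (A *m B) = A *m col i B.
Proof. by apply/matrixP => a b; rewrite !mxE; apply: eq_bigr => j _; rewrite !mxE. Qed.

Lemma trmx_mulmx_entry m (A : 'M[R]_(n, m)) (v : vec) i : (A^T *m v) i 0 = dotv (col i A) v.
Proof. by rewrite dotvE mxE; apply: eq_bigr => j _; rewrite !mxE. Qed.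

Lemma enorm_col_orthonormal m (Q : 'M[R]_(n, m)) i : Q^T *m Q = 1%:M -> enorm (col i Q) = 1.
Proof.
move=> QQ; rewrite enormE /sqnorm -trmx_mulmx_entry -col_mulmx QQ !mxE eqxx.
exact: sqrtr1.
Qed.

Lemma rem_nth_subseq i (s : seq vec) : subseq (rem_nth i s) s.
Proof.
have drop_sub : subseq (drop i.+1 s) (drop i s).
  by rewrite (_ : drop i.+1 s = drop 1 (drop i s)) ?drop_subseq // drop_drop add1n.
by have := cat_subseq (subseq_refl (take i s)) drop_sub; rewrite cat_take_drop.
Qed.

Lemma geo_loop_spec egeo Dl (s t : seq vec) :
  0 <= egeo -> geo_loop egeo Dl s t -> subseq t s /\ frame_lb egeo t.
Proof.
move=> egeo0; elim=> [{}s s_geo|{}s u {}t _ _ [i _ [-> _]] _ [sub_t t_geo]].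
  split=> //; case: s_geo => [->|]; [exact: frame_lb_nil | exact: frame_lb_sigma_min].
by split=> //; apply: subseq_trans sub_t (rem_nth_subseq _ _).
Qed.

Lemma GEN_orthonormal q Dl m (Qb : 'M[R]_(n, m)) out :
  Qb^T *m Qb = 1%:M -> GEN q Dl Qb out ->
  exists2 Qt : 'M[R]_(n, q), Qt^T *m Qt = 1%:M /\ Qb^T *m Qt = 0
    & out = [seq Dl *: v | v <- cols Qt].
Proof.
move=> QbQb [A [Qt [Rt [_ [[def_A [QtQt _]] [Rt_unit ->]]]]]].
exists Qt; last by rewrite /cols; elim: (enum _) => //= i s ->.
split=> //; have -> : Qt = (A - Qb *m Qb^T *m A) *m invmx Rt by rewrite def_A mulmxK.
by rewrite mulmxA mulmxBr !mulmxA QbQb mul1mx subrr mul0mx.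
Qed.

Lemma frame_lb_GEN_completion (sU out : seq vec) m (Qb : 'M[R]_(n, m)) q Dl a :
  0 <= a -> 0 <= Dl -> frame_lb a sU ->
  Qb^T *m Qb = 1%:M -> (Qb^T :=: (seqmx sU)^T)%MS -> GEN q Dl Qb out ->
  frame_lb (Num.min a Dl) (sU ++ out) /\ {in out, forall v, enorm v = Dl}.
Proof.
move=> a0 Dl0 sUa QbQb span_sU /(GEN_orthonormal QbQb) [Qt [QtQt QbQt] ->].
have Qt_sU : {in sU, forall u, Qt^T *m u = 0}.
  move=> u; rewrite -{1}(cols_seqmx sU) => /mapP [j _ ->].
  move/eqmxP: span_sU => /andP [_ /submxP [W def_sU]].
  have -> : seqmx sU = Qb *m W^T by rewrite -[seqmx sU]trmxK def_sU trmx_mul trmxK.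
  by rewrite col_mulmx mulmxA -[Qt^T *m Qb]trmxK trmx_mul trmxK QbQt trmx0 mul0mx.
split=> [|_ /mapP [_ /mapP [i _ ->] ->]]; last first.
  by rewrite enormZ enorm_col_orthonormal // ger0_norm ?mulr1.
apply: frame_lb_cat_orth => //.
  by have := frame_lb_scale (g := Dl) (frame_lb_orthonormal QtQt); rewrite mulr1 ger0_norm.
move=> u _ sUu /mapP [_ /mapP [i _ ->] ->].
by rewrite dotvZr dotvC -trmx_mulmx_entry Qt_sU // mxE mulr0.
Qed.

End NewDirections.

Section Taylor.
Variable R : realType.

Lemma lipschitz_derive_taylor (phi phi' : R -> R) (M : R) :
  (forall t, is_derive t (1 : R) phi (phi' t)) ->
  (forall t, 0 < t < 1 -> `|phi' t - phi' 0| <= M * t) ->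
  `|phi 1 - phi 0 - phi' 0| <= M / 2.
Proof.
move=> dphi lip.
have mvt k : exists2 c, 0 < c < 1 &
    phi 1 - phi 0 - phi' 0 - k = phi' c - phi' 0 - 2 * k * c.
  pose psi := phi - (phi' 0 \*: id + k \*: (id ^+ 2)).
  pose dpsi t := phi' t - (phi' 0 *: (1 : R) + k *: ((2%:R * t ^+ 1) *: (1 : R))).
  have dpsiE t : is_derive t (1 : R) psi (dpsi t).
    by apply: is_deriveB; apply: is_deriveD; apply: is_deriveZ.
  have [c c01 psi_c] := MVT ltr01 (fun t _ => dpsiE t)
    (derivable_within_continuous (fun t _ => @ex_derive _ _ _ _ _ _ _ (dpsiE t))).
  exists c; first by move: c01; rewrite in_itv.
  have scaleE (u v : R) : u *: v = u * v by [].
  by move: psi_c; rewrite /psi /dpsi !fctE /= !scaleE !expr1 !expr1n !expr0n /=; lra.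
have [c1 c1_01 eq1] := mvt (M / 2).
have [c2 c2_01 eq2] := mvt (- (M / 2)).
have := lip c1 c1_01; have := lip c2 c2_01; rewrite !ler_norml.
lra.
Qed.

Variable n : nat.
Notation vec := 'cV[R]_n.

Lemma is_derive_along_line (f : vec -> R) (gradf : vec -> vec) (x d : vec) (t : R) :
  (forall y, differentiable f y /\ forall v, 'd f y v = dotv (gradf y) v) ->
  is_derive t 1 (fun s => f (x + s *: d)) (dotv (gradf (x + t *: d)) d).
Proof.
move=> grad_f; have [df_diff dfE] := grad_f (x + t *: d).
have quotE : (fun h : R => h^-1 *: (((fun s => f (x + s *: d)) \o shift t) (h *: 1)
                - f (x + t *: d))) =
             (fun h : R => h^-1 *: ((f \o shift (x + t *: d)) (h *: d) - f (x + t *: d))).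
  apply: funext => h /=; congr (_ *: (_ - _)); congr f.
  by rewrite scalerDl [h *: 1]mulr1 addrCA addrC.
split; first by rewrite /derivable quotE; apply: diff_derivable.
by rewrite /derive quotE -/(derive f (x + t *: d) d) deriveE.
Qed.

Lemma A1_taylor (f : vec -> R) gradf L (x d : vec) : A1 f gradf L ->
  `|f (x + d) - f x - dotv (gradf x) d| <= L / 2 * enorm d ^+ 2.
Proof.
move=> [grad_f [_ lip]].
have := @lipschitz_derive_taylor (fun s => f (x + s *: d))
  (fun t => dotv (gradf (x + t *: d)) d) (L * enorm d ^+ 2).
rewrite scale1r scale0r addr0 mulrAC; apply=> [t|t /andP[t0 _]].
  exact: is_derive_along_line.
rewrite -dotvBl (le_trans (abs_dotv_le _ _)) // (le_trans (ler_wpM2r (enorm_ge0 d) (lip _ _))) //.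
by rewrite addrC addKr enormZ ger0_norm ?(ltW t0) //; lra.
Qed.

Lemma A1_lipschitz_ge0 (f : vec -> R) gradf L :
  (0 < n)%N -> A1 f gradf L -> 0 <= L.
Proof.
move=> n0 [_ [_ lip]]; set e : vec := const_mx 1.
have e0 : 0 < enorm (0 - e).
  rewrite sub0r enormN enormE sqrtr_gt0 /sqnorm dotvE.
  rewrite (eq_bigr (fun _ => 1)) => [|i _]; last by rewrite mxE mulr1.
  by rewrite sumr_const card_ord ltr0n.
by have := le_trans (enorm_ge0 _) (lip 0 e); rewrite pmulr_lge0.
Qed.

End Taylor.

Section ModelGradient.
Variables (R : realType) (n : nat).
Notation vec := 'cV[R]_n.

Lemma enorm_le_sqrt_dim m (v : 'cV[R]_m) B :
  0 <= B -> (forall i, `|v i 0| <= B) -> enorm v <= Num.sqrt m%:R * B.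
Proof.
move=> B0 vB; rewrite -(ger0_norm B0) -sqrtr_sqr -sqrtrM // enormE ler_sqrt ?mulr_ge0 //.
rewrite /sqnorm dotvE (le_trans (_ : _ <= \sum_(i < m) B ^+ 2)) //.
  apply: ler_sum => i _; rewrite -expr2 -real_normK ?num_real //.
  by rewrite lerXn2r ?nnegrE ?normr_ge0 // (ger0_norm B0).
by rewrite sumr_const card_ord mulr_natl.
Qed.

Lemma lbound_unitmx m (A : 'M[R]_m) a :
  0 < a -> (forall c, a ^+ 2 * sqnorm c <= sqnorm (A *m c)) -> A \in unitmx.
Proof.
move=> a0 Aa; rewrite -unitmx_tr -row_free_unit -kermx_eq0; apply/negPn/negP.
move=> /matrix0Pn [i [j ker_ij]].
set u := row i (kermx A^T).
have Au : A *m u^T = 0.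
  by rewrite -[A]trmxK -trmx_mul /u -row_mul mulmx_ker row0 trmx0.
have /sqnorm_eq0 u0 : sqnorm u^T = 0.
  apply/eqP; rewrite eq_le sqnorm_ge0 andbT -(pmulr_rle0 _ (exprn_gt0 2 a0)).
  by have := Aa u^T; rewrite Au /sqnorm dotv0l.
by move: ker_ij; have := congr1 (fun M : 'cV[R]_m => M j 0) u0; rewrite !mxE => ->; rewrite eqxx.
Qed.

Lemma trmx_lbound m (A : 'M[R]_m) a y : 0 < a ->
  (forall c, a ^+ 2 * sqnorm c <= sqnorm (A *m c)) -> a * enorm y <= enorm (A^T *m y).
Proof.
move=> a0 Aa; set w := invmx A *m y.
have Aw : A *m w = y by rewrite /w mulKVmx // (lbound_unitmx a0 Aa).
have aw : a * enorm w <= enorm y by apply: sqnorm_le_enorm (ltW a0) _; rewrite -Aw.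
have y2 : enorm y ^+ 2 <= enorm (A^T *m y) * enorm w.
  by rewrite enorm_sqr /sqnorm -{2}Aw dotv_mulmx cauchy_schwarz.
have [y0|ny0] := eqVneq (enorm y) 0; first by rewrite y0 mulr0 enorm_ge0.
have y_gt0 : 0 < enorm y by rewrite lt0r ny0 enorm_ge0.
rewrite -(ler_pM2r y_gt0) -mulrA -expr2 (le_trans (ler_wpM2l (ltW a0) y2)) //.
by rewrite mulrCA ler_wpM2l ?enorm_ge0.
Qed.

Lemma model_grad_residual p (f : vec -> R) (x v : vec) (D Q : 'M[R]_(n, p)) (Rr : 'M[R]_p) i :
  isQR D Q Rr -> Rr \in unitmx ->
  (Rr^T *m (model_grad f x Q Rr - Q^T *m v)) i 0 = f (x + col i D) - f x - dotv v (col i D).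
Proof.
move=> [def_D _] Rr_unit.
rewrite mulmxBr /model_grad mulKVmx ?unitmx_tr // mulmxA -trmx_mul -def_D.
rewrite !mxE; congr (_ - _ - _); first by rewrite def_D col_mulmx.
by rewrite dotvE; apply: eq_bigr => j _; rewrite !mxE mulrC.
Qed.

Lemma model_grad_error (f : vec -> R) gradf L (x : vec) p (D Q : 'M[R]_(n, p))
    (Rr : 'M[R]_p) a B :
  A1 f gradf L -> 0 <= L -> 0 < a -> isQR D Q Rr -> frame_lb a (cols D) ->
  {in cols D, forall v, enorm v <= B} ->
  enorm (model_grad f x Q Rr - Q^T *m gradf x) <= Num.sqrt p%:R * (L / 2 * B ^+ 2) / a.
Proof.
move=> A1f L0 a0 QR_D Da DB; have [def_D [QQ _]] := QR_D.
have Rr_lb c : a ^+ 2 * sqnorm c <= sqnorm (Rr *m c).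
  by rewrite -[sqnorm (Rr *m c)](sqnorm_orthonormal _ QQ) mulmxA -def_D frame_lb_mulmx.
rewrite ler_pdivlMr // mulrC (le_trans (trmx_lbound _ a0 Rr_lb)) //.
have L2 : 0 <= L / 2 by lra.
apply: enorm_le_sqrt_dim => [|i]; first by rewrite mulr_ge0 ?sqr_ge0.
have B0 : 0 <= B := le_trans (enorm_ge0 _) (DB _ (col_in_cols D i)).
rewrite (model_grad_residual f x (gradf x) i QR_D) ?(lbound_unitmx a0 Rr_lb) //.
apply: le_trans (A1_taylor _ _ A1f) _.
by rewrite ler_wpM2l // lerXn2r ?nnegrE ?enorm_ge0 ?DB ?col_in_cols.
Qed.

End ModelGradient.

Section Criticality.
Variables (R : realType) (n : nat).
Notation vec := 'cV[R]_n.

Lemma aligned_criticality_le_pim p (C : set vec) (x gx : vec) (Q : 'M[R]_(n, p)) g :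
  C x -> Q^T *m Q = 1%:M ->
  `|inf [set dotv gx (Q *m Q^T *m d) | d in [set d : vec | C (x + d) /\ enorm d <= 1]]|
    <= pim C x Q g + enorm (g - Q^T *m gx).
Proof.
move=> Cx QQ.
set W := [set dotv gx _ | d in _].
set S := [set dotv g d | d in [set d : 'cV[R]_p |
  (exists2 z, C z & d = Q^T *m (z - x)) /\ enorm d <= 1]].
set err := enorm _.
have W0 : W 0 by exists 0; rewrite ?mulmx0 ?dotv0r //= addr0 enorm0.
have QQTd_le d : enorm d <= 1 -> enorm (Q^T *m d) <= 1.
  exact/le_trans/enorm_trmx_orthonormal.
have W_lb : has_lbound W.
  exists (- enorm gx) => _ [d [_ d1] <-].
  rewrite lerNl -dotvNl (le_trans (cauchy_schwarz _ _)) // enormN.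
  rewrite -mulmxA -[X in _ <= X]mulr1 ler_wpM2l ?enorm_ge0 //.
  by rewrite enormE sqnorm_orthonormal // -enormE QQTd_le.
have S_lb : has_lbound S.
  exists (- enorm g) => _ [d [_ d1] <-].
  rewrite lerNl -dotvNl (le_trans (cauchy_schwarz _ _)) // enormN.
  by rewrite -[X in _ <= X]mulr1 ler_wpM2l ?enorm_ge0.
have infW_le0 : inf W <= 0 by apply: ge_inf.
have infS_err : inf S - err <= inf W.
  apply: lb_le_inf; first by exists 0.
  move=> _ [d [Cxd d1] <-]; set d' := Q^T *m d.
  have S_d' : S (dotv g d').
    exists d' => //; split; last exact: QQTd_le.
    by exists (x + d) => //; rewrite /d' addrC addKr.
  have split_g : dotv g d' = dotv gx (Q *m Q^T *m d) + dotv (g - Q^T *m gx) d'.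
    by rewrite -mulmxA dotv_mulmx -dotvDl addrC subrK.
  have err_d' : dotv (g - Q^T *m gx) d' <= err.
    by rewrite (le_trans (cauchy_schwarz _ _)) // -[X in _ <= X]mulr1 ler_wpM2l ?enorm_ge0 ?QQTd_le.
  have := ge_inf S_lb S_d'; lra.
rewrite /pim -/S (ler0_norm infW_le0).
have : - inf S <= `|inf S| by rewrite -normrN ler_norm.
lra.
Qed.

End Criticality.

Section Constants.
Variable R : realType.
Implicit Types (Dmin Dmax erad egeo L Dl : R).

Definition frame_const Dmin Dmax egeo : R := (Num.max (1 / egeo) (1 / Dmin) * Dmax)^-1.

Lemma frame_const_le Dmin Dmax egeo Dl : 0 < egeo -> 0 < Dmin -> Dmin <= Dl -> Dl <= Dmax ->
  0 < frame_const Dmin Dmax egeo * Dl <= Num.min egeo Dl.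
Proof.
move=> egeo0 Dmin0 Dmin_Dl Dl_max; rewrite /frame_const.
set Mx := Num.max _ _.
have egeo_Mx : 1 <= egeo * Mx.
  by rewrite -(mulfV (lt0r_neq0 egeo0)) ler_pM2l // le_max div1r lexx.
have Dmin_Mx : 1 <= Dmin * Mx.
  by rewrite -(mulfV (lt0r_neq0 Dmin0)) ler_pM2l // le_max !div1r lexx orbT.
have Mx0 : 0 < Mx by rewrite -(pmulr_rgt0 _ egeo0) (lt_le_trans ltr01).
have Dmax0 : 0 < Dmax by rewrite (lt_le_trans Dmin0) // (le_trans Dmin_Dl).
have Dl0 : 0 < Dl := lt_le_trans Dmin0 Dmin_Dl.
rewrite mulrC -/(Dl / _) divr_gt0 ?mulr_gt0 //=.
rewrite le_min !ler_pdivrMr ?mulr_gt0 //; apply/andP; split; first by nra.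
rewrite ler_peMr ?(ltW Dl0) // (le_trans Dmin_Mx) // mulrC.
by rewrite ler_wpM2l ?(ltW Mx0) // (le_trans Dmin_Dl).
Qed.

Lemma kappa_eg_ge0 p L Dmin Dmax erad egeo : 0 <= L -> 0 < egeo -> 0 < Dmin -> 0 <= Dmax ->
  0 <= erad -> 0 <= kappa_eg p L Dmin Dmax erad egeo.
Proof.
move=> L0 egeo0 Dmin0 Dmax0 erad0.
have Mx0 : 0 <= Num.max (1 / egeo) (1 / Dmin) by rewrite le_max mul1r invr_ge0 (ltW egeo0).
have M0 : 0 <= Num.sqrt p%:R * M_Rinv Dmin Dmax erad egeo.
  by rewrite /M_Rinv !mulr_ge0 ?sqrtr_ge0.
by rewrite /kappa_eg mulr_ge0 // mulr_ge0 //; lra.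
Qed.

Lemma model_error_le_kappa p L Dmin Dmax erad egeo Dl : 0 <= L -> 0 < egeo -> 0 < Dmin ->
  Dmin <= Dl -> Dl <= Dmax -> 0 <= erad ->
  Num.sqrt p%:R * (L / 2 * (erad * Dl) ^+ 2) / (frame_const Dmin Dmax egeo * Dl)
    <= kappa_eg p L Dmin Dmax erad egeo * Dl.
Proof.
move=> L0 egeo0 Dmin0 Dmin_Dl Dl_max erad0.
have Dl0 : 0 < Dl := lt_le_trans Dmin0 Dmin_Dl.
have Dmax0 : 0 < Dmax := lt_le_trans Dl0 Dl_max.
rewrite /frame_const /kappa_eg /M_Rinv; set Mx := Num.max _ _.
have Mx0 : 0 < Mx by rewrite lt_max mul1r invr_gt0 egeo0.
have -> : L / 2 * (2 + Num.sqrt p%:R * (Mx * erad * Dmax)) * erad * Dl =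
          Num.sqrt p%:R * (L / 2 * (erad * Dl) ^+ 2) / ((Mx * Dmax)^-1 * Dl) + L * erad * Dl.
  by field; rewrite !lt0r_neq0.
by rewrite lerDl !mulr_ge0 // ltW.
Qed.

End Constants.

Section Run.
Variables (R : realType) (n p prand : nat) (f : 'cV[R]_n -> R) (C : set 'cV[R]_n)
  (Dmin Dmax gdec : R) (ginc : nat -> R) (eta1 eta2 mu erad egeo : R) (K : nat)
  (x : nat -> 'cV[R]_n) (Delta : nat -> R) (D Q : nat -> 'M[R]_(n, p))
  (Rm : nat -> 'M[R]_p).
Hypothesis params :
  clarsta_params n p prand (Delta 0) Dmin Dmax gdec ginc eta1 eta2 mu erad egeo.
Hypothesis run : clarsta_run prand f C Dmax gdec ginc eta1 eta2 mu erad egeo K x Delta D Q Rm.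
Hypothesis Delta_ge_min : forall k, (k <= K)%N -> Dmin <= Delta k.

Definition poised_at k : Prop :=
  [/\ C (x k), Delta k <= Dmax,
      frame_lb (frame_const Dmin Dmax egeo * Delta k) (cols (D k))
    & {in cols (D k), forall v, enorm v <= erad * Delta k}].

Lemma poised_completion k (sU out : seq 'cV[R]_n) m (Qb : 'M[R]_(n, m)) q :
  (k <= K)%N -> Delta k <= Dmax -> frame_lb egeo sU ->
  {in sU, forall v, enorm v <= erad * Delta k} ->
  Qb^T *m Qb = 1%:M -> (Qb^T :=: (seqmx sU)^T)%MS -> GEN q (Delta k) Qb out ->
  frame_lb (frame_const Dmin Dmax egeo * Delta k) (sU ++ out) /\
  {in sU ++ out, forall v, enorm v <= erad * Delta k}.
Proof.
move=> le_kK Dk_max sU_frame sU_norm QbQb span_sU gen.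
have [_ [_ [Dmin0 _]] _ _ [erad1 egeo0]] := params.
have /andP[cDk0 cDk_le] := frame_const_le egeo0 Dmin0 (Delta_ge_min le_kK) Dk_max.
have Dk0 : 0 <= Delta k := ltW (lt_le_trans Dmin0 (Delta_ge_min le_kK)).
have [frame out_norm] := frame_lb_GEN_completion (ltW egeo0) Dk0 sU_frame QbQb span_sU gen.
split; first by apply: frame_lb_le frame; rewrite cDk_le ltW.
move=> v; rewrite mem_cat => /orP[/sU_norm // | /out_norm ->].
by rewrite ler_peMl.
Qed.

Lemma poised_at0 : poised_at 0.
Proof.
have [Cx0 gen0 _ _] := run; have [_ [_ [_ [_ D0_max]]] _ _ _] := params.
have nil_span : ((0 : 'M[R]_(n, 0))^T :=: (seqmx [::])^T)%MS.
  by have -> : (seqmx [::])^T = (0 : 'M[R]_(n, 0))^T by apply/matrixP => -[].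
have QQ0 : (0 : 'M[R]_(n, 0))^T *m 0 = 1%:M by apply/matrixP => -[].
have nil_norm : {in [::], forall v : 'cV[R]_n, enorm v <= erad * Delta 0} by [].
have [frame norm] :=
  poised_completion (leq0n K) D0_max (frame_lb_nil _) nil_norm QQ0 nil_span gen0.
by split.
Qed.

Lemma poised_at_succ k : (k < K)%N -> poised_at k -> poised_at k.+1.
Proof.
move=> lt_kK [Cxk Dk_max Dk_frame Dk_norm].
have [_ [_ [Dmin0 _]] [gdec0 [gdec1 _]] _ [_ egeo0]] := params.
have Dk0 : 0 <= Delta k := ltW (lt_le_trans Dmin0 (Delta_ge_min (ltnW lt_kK))).
have gDk_max : gdec * Delta k <= Dmax.
  exact: le_trans (ler_piMl Dk0 (ltW gdec1)) Dk_max.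
have [_ _ _ step] := run; move: (step k lt_kK); rewrite /clarsta_step /poised_at.
case: ifP => _ => [[shat [s [s0 [s1 [s3 [sU [m [Qb [out]]]]]]]]] /= | [-> -> ->]].
  move=> [_ _ Delta_next [Cx_next _ _] [_ [_ geo sub_sU] [QbQb span_sU] gen cols_next]].
  have Dnext_max : Delta k.+1 <= Dmax.
    by rewrite Delta_next; case: ifP => // _; case: ifP => // _; rewrite ge_min lexx orbT.
  have [sub_s3 s3_frame] := geo_loop_spec (ltW egeo0) geo.
  have sU_norm : {in sU, forall v, enorm v <= erad * Delta k.+1}.
    move=> v /(mem_subseq sub_sU)/(mem_subseq sub_s3).
    by rewrite mem_filter => /andP[].
  have [frame norm] := poised_completion lt_kK Dnext_max (frame_lb_subseq sub_sU s3_frame)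
    sU_norm QbQb span_sU gen.
  by split; rewrite // cols_next.
split=> //; rewrite cols_scale.
  by have := frame_lb_scale (g := gdec) Dk_frame; rewrite ger0_norm ?(ltW gdec0) // mulrCA.
move=> _ /mapP [v Dk_v ->]; rewrite enormZ ger0_norm ?(ltW gdec0) // mulrCA.
by rewrite ler_wpM2l ?(ltW gdec0) ?Dk_norm.
Qed.

Lemma poised_at_all k : (k <= K)%N -> poised_at k.
Proof.
elim: k => [_|k IHk lt_kK]; first exact: poised_at0.
exact: poised_at_succ lt_kK (IHk (ltnW lt_kK)).
Qed.

End Run.

Theorem mainTheorem11 (R : realType) (n p prand : nat)
  (f : 'cV[R]_n -> R) (gradf : 'cV[R]_n -> 'cV[R]_n) (L : R) (C : set 'cV[R]_n)
  (Dmin Dmax gdec : R) (ginc : nat -> R) (eta1 eta2 mu erad egeo : R)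
  (K : nat) (x : nat -> 'cV[R]_n) (Delta : nat -> R)
  (D Q : nat -> 'M[R]_(n, p)) (Rm : nat -> 'M[R]_p) (beta eps : R) :
  (* C closed convex with nonempty interior *)
  closed C -> convex_set C -> (exists z, (interior C) z) ->
  clarsta_params n p prand (Delta 0) Dmin Dmax gdec ginc eta1 eta2 mu erad egeo ->
  A1 f gradf L ->
  clarsta_run prand f C Dmax gdec ginc eta1 eta2 mu erad egeo K x Delta D Q Rm ->
  (forall k, (k <= K)%N -> Dmin <= Delta k) ->
  0 < beta -> beta < 1 -> 0 < eps ->
  let alpha := p%:R / n%:R * beta in
  let eps_g := alpha * eps / (kappa_eg p L Dmin Dmax erad egeo * mu + 1) in
  0 < eps_g /\
  forall k, (k <= K)%N ->
    well_aligned alpha C (gradf (x k)) (x k) (Q k) ->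
    Delta k <= mu * pim C (x k) (Q k) (model_grad f (x k) (Q k) (Rm k)) ->
    eps <= pif C (gradf (x k)) (x k) ->
    eps_g <= pim C (x k) (Q k) (model_grad f (x k) (Q k) (Rm k)).
Proof.
move=> _ _ _ params A1f run Delta_ge_min beta0 _ eps0 alpha eps_g.
have [[prand1 [prand_p p_n]] [_ [Dmin0 [Dmin_max _]]] _ [_ [_ [_ mu0]]] [erad1 egeo0]]
  := params.
have p0 : (0 < p)%N := leq_trans prand1 prand_p.
have n0 : (0 < n)%N := leq_trans p0 p_n.
have erad0 : 0 <= erad := le_trans ler01 erad1.
have L0 : 0 <= L := A1_lipschitz_ge0 n0 A1f.
rewrite /eps_g; set kappa := kappa_eg p L Dmin Dmax erad egeo.
have kappa0 : 0 <= kappa.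
  by apply: kappa_eg_ge0 => //; apply: ltW (lt_le_trans Dmin0 Dmin_max).
have alpha0 : 0 < alpha by rewrite /alpha !mulr_gt0 ?invr_gt0 ?ltr0n.
have kappa_mu0 : 0 <= kappa * mu := mulr_ge0 kappa0 (ltW mu0).
split=> [|k le_kK]; first by apply: divr_gt0; [exact: mulr_gt0 | lra].
rewrite /well_aligned; set g := model_grad _ _ _ _; set pim_k := pim _ _ _ _.
move=> aligned accurate eps_le.
have [Cxk Dk_max Dk_frame Dk_norm] := poised_at_all params run Delta_ge_min le_kK.
have [_ _ QR _] := run; have [_ [QQ _]] := QR k le_kK.
have Dk_ge_min := Delta_ge_min k le_kK.
have /andP[cDk0 _] := frame_const_le egeo0 Dmin0 Dk_ge_min Dk_max.
have model_err : enorm (g - (Q k)^T *m gradf (x k)) <= kappa * Delta k.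
  apply: le_trans _ (model_error_le_kappa p L0 egeo0 Dmin0 Dk_ge_min Dk_max erad0).
  by rewrite /g; apply: model_grad_error (QR k le_kK) Dk_frame Dk_norm.
have crit := aligned_criticality_le_pim (gradf (x k)) g Cxk QQ; rewrite -/pim_k in crit.
have kappa_Delta : kappa * Delta k <= kappa * (mu * pim_k) by rewrite ler_wpM2l.
have alpha_eps : alpha * eps <= alpha * pif C (gradf (x k)) (x k) by rewrite ler_pM2l.
(* alpha eps <= alpha pi^f <= |inf ...| <= pim_k + kappa Delta_k <= (1 + kappa mu) pim_k *)
rewrite ler_pdivrMr; lra.
Qed.
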